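(* For every integer $r\ge1$, let $\mathcal{REP}_r$ be the category of finite-dimensional modules over the polynomial algebra $\Bbbk[x_1,\dots,x_r]$. Then $\mathrm{fpdim}(\mathcal{REP}_r)=r$.
   Context: $\Bbbk$ is algebraically closed. For a $\Bbbk$-linear abelian category $\mathcal C$: a brick is an object $M$ with $\mathrm{Hom}_{\mathcal C}(M,M)=\Bbbk$; a brick set is a finite set $\phi=\{X_1,\dots,X_n\}$ of bricks with $\dim\mathrm{Hom}_{\mathcal C}(X_i,X_j)=\delta_{ij}$; its adjacency matrix is $C(\phi)=(\dim\mathrm{Ext}^1_{\mathcal C}(X_i,X_j))_{i,j}$; $\mathrm{fpdim}(\mathcal C)=\sup\{\rho(C(\phi)):\phi\text{ a brick set}\}$, $\rho$ the spectral radius. *)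

From HB Require Import structures.
From mathcomp Require Import all_boot all_order all_algebra all_field.
Set Implicit Arguments. Unset Strict Implicit. Unset Printing Implicit Defensive.
Import Order.TTheory GRing.Theory Num.Theory.
Local Open Scope ring_scope.

(* A finite-dimensional module over k[x_1,...,x_r]: the space of row vectors
   'rV[k]_dimv, with x_i acting on the right by the matrix act i; the
   actions pairwise commute. *)
Record fdmod (k : fieldType) (r : nat) := FDMod {
  dimv : nat;
  act : 'I_r -> 'M[k]_dimv;
  act_comm : forall i j, act i *m act j = act j *m act i }.

Section FDMod.
Variables (k : fieldType) (r : nat).

(* Hom(M,N): matrices X with v |-> v X a module map, i.e. A_i X = X B_i. *)
Definition homdim (M N : fdmod k r) : nat :=
  \rank (\bigcap_(i < r)
     kermx (lin_mx (fun X : 'M[k]_(dimv M, dimv N) => act M i *m X - X *m act N i)))%MS.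

(* Ext^1(M,N): extensions 0 -> N -> E -> M -> 0, E = rows [u_N, v_M] with
   x_i acting by block matrix [[B_i, 0], [D_i, A_i]].  Cocycles: tuples
   (D_i) (stored as rows mxvec D_i of a r x (n*m) matrix) making these block
   matrices commute; coboundaries: D_i = A_i X - X B_i. *)
Definition ext_cocycle_map (M N : fdmod k r) (p : 'I_r * 'I_r) :=
  lin_mx (fun T : 'M[k]_(r, dimv M * dimv N) =>
    let D i := vec_mx (row i T) : 'M[k]_(dimv M, dimv N) in
    (D p.1 *m act N p.2 + act M p.1 *m D p.2)
    - (D p.2 *m act N p.1 + act M p.2 *m D p.1)).

Definition ext_cocycles (M N : fdmod k r) :=
  (\bigcap_(p : 'I_r * 'I_r) kermx (ext_cocycle_map M N p))%MS.

Definition ext_coboundaries (M N : fdmod k r) :=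
  lin_mx (fun X : 'M[k]_(dimv M, dimv N) =>
    \matrix_(i < r) mxvec (act M i *m X - X *m act N i)).

Definition extdim (M N : fdmod k r) : nat :=
  (\rank (ext_cocycles M N) - \rank (ext_coboundaries M N))%N.

Definition brick_set (s : nat) (phi : 'I_s -> fdmod k r) : Prop :=
  forall i j, homdim (phi i) (phi j) = (i == j : nat).

Definition adjacency (s : nat) (phi : 'I_s -> fdmod k r) : 'M[algC]_s :=
  \matrix_(i, j) (extdim (phi i) (phi j))%:R.
End FDMod.

Definition eigenvalues (s : nat) (A : 'M[algC]_s) : seq algC :=
  sval (closed_field_poly_normal (char_poly A)).

Definition spectral_radius (s : nat) (A : 'M[algC]_s) : algC :=
  \big[Num.max/0]_(z <- eigenvalues A) `|z|.

Definition fpdim_is (k : fieldType) (r : nat) (d : algC) : Prop :=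
  (forall s (phi : 'I_s -> fdmod k r), brick_set phi ->
      spectral_radius (adjacency phi) <= d) /\
  (forall x : algC, x < d ->
      exists s (phi : 'I_s -> fdmod k r),
        brick_set phi /\ x < spectral_radius (adjacency phi)).

(* A brick of REP_r is one-dimensional: its endomorphism space contains the
   identity and every x_i, so if it is the line k then each x_i acts by a
   scalar, and then every matrix is an endomorphism.  A one-dimensional module
   is a character a : {1..r} -> k.  For two copies of the same character every
   tuple (D_i) is a 1-cocycle and every coboundary vanishes, so Ext^1 has
   dimension r; for characters a <> b the cocycle condition
   D_i (a_j - b_j) = D_j (a_i - b_i) confines the cocycles to the line spanned
   by the coboundary a - b, so Ext^1 = 0.  Hence the adjacency matrix of every
   brick set is r times the identity. *)

From HB Require Import structures.
From mathcomp Require Import all_boot all_order all_algebra all_field.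
From mathcomp Require Import ring.
Set Implicit Arguments. Unset Strict Implicit. Unset Printing Implicit Defensive.
Import Order.TTheory GRing.Theory Num.Theory.
Local Open Scope ring_scope.

Section LinMx.
Variable R : comNzRingType.

Lemma mul_vec_lin_fun m1 n1 m2 n2 (f : 'M[R]_(m1, n1) -> 'M[R]_(m2, n2)) :
  linear f -> forall A, mxvec A *m lin_mx f = mxvec (f A).
Proof.
move=> lin_f A.
exact: (mul_vec_lin (HB.pack f (GRing.isLinear.Build _ _ _ _ f lin_f))).
Qed.

Lemma lin_mx0 m1 n1 m2 n2 (f : 'M[R]_(m1, n1) -> 'M[R]_(m2, n2)) :
  (forall A, f A = 0) -> lin_mx f = 0.
Proof. by move=> f0; apply/matrixP => i j; rewrite !mxE /= f0 linear0 !mxE. Qed.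

Lemma intertwine_linear m n (A : 'M[R]_m) (B : 'M[R]_n) :
  linear (fun X => A *m X - X *m B).
Proof.
move=> a X Y /=.
by rewrite mulmxDr mulmxDl -scalemxAr -scalemxAl scalerBr opprD addrACA.
Qed.

End LinMx.

Lemma rank_bigcap_kermx0 (F : fieldType) (I : finType) m n (G : I -> 'M[F]_(m, n)) :
  (forall i, G i = 0) -> \rank (\bigcap_i kermx (G i))%MS = m.
Proof.
move=> G0; suff: (1%:M <= \bigcap_i kermx (G i))%MS by rewrite sub1mx => /eqP.
by apply/sub_bigcapmxP => i _; apply/sub_kermxP; rewrite G0 mulmx0.
Qed.

Lemma mx11_comm (F : comNzRingType) (a X : 'M[F]_1) : a *m X = X *m a.
Proof. by rewrite [a]mx11_scalar scalar_mxC. Qed.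

Lemma ord_mul11 (l : 'I_(1 * 1)) : l = ord0.
Proof. by apply/val_inj; case: l => -[]. Qed.

Section Modules.
Variables (k : fieldType) (r : nat).
Implicit Types M N : fdmod k r.

Definition homspace M N :=
  (\bigcap_(i < r) kermx (lin_mx (fun X => act M i *m X - X *m act N i)))%MS.

Lemma sub_homspace M N (X : 'M_(dimv M, dimv N)) :
  (forall i, act M i *m X = X *m act N i) -> (mxvec X <= homspace M N)%MS.
Proof.
move=> homX; apply/sub_bigcapmxP => i _; apply/sub_kermxP.
rewrite mul_vec_lin_fun; last exact: intertwine_linear.
by rewrite homX subrr linear0.
Qed.

Lemma brick_dim1 M : homdim M M = 1%N -> dimv M = 1%N.
Proof.
rewrite -[homdim M M]/(\rank (homspace M M)) => rk1.
have dim_gt0 : (0 < dimv M)%N.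
  by move: (rank_leq_col (homspace M M)); rewrite rk1; case: (dimv M).
have hom1 : (mxvec 1%:M <= homspace M M)%MS.
  by apply: sub_homspace => i; rewrite mul1mx mulmx1.
have /andP[_ homE] : (mxvec 1%:M == homspace M M)%MS.
  rewrite -(mxrank_leqif_eq hom1) rk1 rank_rV mxvec_eq0 -mxrank_eq0 mxrank1.
  by rewrite -lt0n dim_gt0.
have act_scalar i : exists a, act M i = a%:M.
  have /sub_rVP[a act_a] : (mxvec (act M i) <= mxvec 1%:M)%MS.
    by apply: submx_trans homE; apply: sub_homspace => j; rewrite act_comm.
  by exists a; rewrite -[act M i]mxvecK act_a -linearZ /= mxvecK scalemx1.
have : \rank (homspace M M) = (dimv M * dimv M)%N.
  apply: rank_bigcap_kermx0 => i; apply: lin_mx0 => X.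
  by have [a ->] := act_scalar i; rewrite mul_scalar_mx mul_mx_scalar subrr.
by rewrite rk1 => /esym/eqP; rewrite muln_eq1 => /andP[/eqP].
Qed.

Lemma mul_vec_ext_cocycle_map M N p (T : 'M_(r, dimv M * dimv N)) :
  let D i := vec_mx (row i T) in
  mxvec T *m ext_cocycle_map M N p =
  mxvec ((D p.1 *m act N p.2 + act M p.1 *m D p.2)
         - (D p.2 *m act N p.1 + act M p.2 *m D p.1)).
Proof.
have addrACA4 (V : zmodType) (x x' y y' z z' w w' : V) :
    x + x' + (y + y') - (z + z' + (w + w')) = x + y - (z + w) + (x' + y' - (z' + w')).
  by rewrite [x + x' + _]addrACA [z + z' + _]addrACA opprD (addrACA (x + y)).
rewrite /ext_cocycle_map mul_vec_lin_fun // => a X Y /=.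
rewrite !linearP /= !(mulmxDl, mulmxDr) -!(scalemxAl, scalemxAr).
by rewrite scalerBr !scalerDr addrACA4.
Qed.

Lemma mul_vec_ext_coboundaries M N (X : 'M_(dimv M, dimv N)) :
  mxvec X *m ext_coboundaries M N =
  mxvec (\matrix_i mxvec (act M i *m X - X *m act N i)).
Proof.
rewrite mul_vec_lin_fun // => a Y Z; apply/matrixP => i j.
by rewrite !mxE intertwine_linear linearP /= !mxE.
Qed.

End Modules.

Section Dim1.
Variables (k : fieldType) (r : nat).

Lemma fdmod_dim1 (M : fdmod k r) : dimv M = 1%N ->
  exists A (cA : forall i j, A i *m A j = A j *m A i), M = @FDMod k r 1 A cA.
Proof. by case: M => n A cA /= n1; subst n; exists A, cA. Qed.

Variables (A B : 'I_r -> 'M[k]_1).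
Variables (cA : forall i j, A i *m A j = A j *m A i)
          (cB : forall i j, B i *m B j = B j *m B i).
Local Notation MA := (@FDMod k r 1 A cA).
Local Notation MB := (@FDMod k r 1 B cB).
Let d i := A i 0 0 - B i 0 0.

Lemma homdim_dim1_eq : (forall i, A i = B i) -> homdim MA MB = 1%N.
Proof.
move=> AB; rewrite /homdim rank_bigcap_kermx0 // => i.
by apply: lin_mx0 => X /=; rewrite AB mx11_comm subrr.
Qed.

Lemma homdim_dim1_neq : homdim MA MB = 0%N -> exists i, d i != 0.
Proof.
move=> hom0; apply/existsP; apply: contraPT hom0 => /existsPn d0.
rewrite homdim_dim1_eq // => i; rewrite [A i]mx11_scalar [B i]mx11_scalar.
by move/negPn: (d0 i); rewrite subr_eq0 => /eqP->.
Qed.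

Lemma extdim_dim1_self : extdim MA MA = r.
Proof.
rewrite /extdim (_ : ext_coboundaries _ _ = 0) ?mxrank0 ?subn0; last first.
  apply: lin_mx0 => X; apply/matrixP => i j.
  by rewrite !mxE mx11_comm subrr linear0 !mxE.
rewrite /ext_cocycles rank_bigcap_kermx0 ?muln1 // => p; apply: lin_mx0 => T /=.
by rewrite (mx11_comm (A p.1)) (mx11_comm (A p.2)) [X in X - _]addrC subrr.
Qed.

Lemma ext_cocycle_dim1 (T : 'M[k]_(r, 1 * 1)) : (mxvec T <= ext_cocycles MA MB)%MS ->
  forall i j, T i ord0 * d j = T j ord0 * d i.
Proof.
move=> /sub_bigcapmxP cocT i j; have /sub_kermxP := cocT (i, j) isT.
rewrite mul_vec_ext_cocycle_map /= => /eqP; rewrite mxvec_eq0 => /eqP/matrixP/(_ 0 0).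
rewrite !mxE !big_ord1 !mxE !(ord_mul11 (mxvec_index _ _)) !ord1 => coc_ij.
by apply/eqP; rewrite -subr_eq0 -oppr_eq0 -coc_ij /d; apply/eqP; ring.
Qed.

Lemma rank_ext_cocycles_dim1 i0 : d i0 != 0 -> (\rank (ext_cocycles MA MB) <= 1)%N.
Proof.
move=> d_nz; pose W : 'M_(r, 1 * 1) := \matrix_(j, l) d j.
apply: leq_trans (rank_leq_row (mxvec W)); apply: mxrankS; apply/rV_subP => v.
rewrite -[v]vec_mxK; set T := vec_mx v => /ext_cocycle_dim1 cocT.
rewrite (_ : T = (T i0 ord0 / d i0) *: W) ?linearZ ?scalemx_sub //.
apply/matrixP => j l; rewrite [RHS]mxE [W _ _]mxE (ord_mul11 l); apply: (mulIf d_nz).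
by rewrite cocT mulrAC divfK.
Qed.

Lemma rank_ext_coboundaries_dim1 i0 : d i0 != 0 -> (0 < \rank (ext_coboundaries MA MB))%N.
Proof.
move=> d_nz; rewrite lt0n mxrank_eq0; apply: contraNneq d_nz => cob0.
have := mul_vec_ext_coboundaries (M := MA) (N := MB) 1%:M.
rewrite cob0 mulmx0 => /esym/eqP.
rewrite mxvec_eq0 => /eqP/matrixP/(_ i0 (mxvec_index 0 0)).
by rewrite !mxE mxvecE mulmx1 mul1mx !mxE => /eqP.
Qed.

Lemma extdim_dim1_neq i0 : d i0 != 0 -> extdim MA MB = 0%N.
Proof.
move=> d_nz; apply/eqP; rewrite subn_eq0.
exact: leq_trans (rank_ext_cocycles_dim1 d_nz) (rank_ext_coboundaries_dim1 d_nz).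
Qed.

End Dim1.

Lemma adjacency_brick_set (k : fieldType) r s (phi : 'I_s -> fdmod k r) :
  brick_set phi -> adjacency phi = (r%:R : algC)%:M.
Proof.
move=> bricks; apply/matrixP => i j; rewrite !mxE.
have dim1 l : dimv (phi l) = 1%N by apply: brick_dim1; rewrite bricks eqxx.
have [A [cA phiA]] := fdmod_dim1 (dim1 i).
have [<- | neq_ij] := eqVneq i j; first by rewrite phiA extdim_dim1_self.
have [B [cB phiB]] := fdmod_dim1 (dim1 j).
have := bricks i j; rewrite (negbTE neq_ij) phiA phiB => /homdim_dim1_neq[i0 d_nz].
by rewrite (extdim_dim1_neq cA cB d_nz).
Qed.

Lemma char_poly_scalar (R : comNzRingType) s (c : R) :
  char_poly (c%:M : 'M_s) = ('X - c%:P) ^+ s.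
Proof.
by rewrite /char_poly /char_poly_mx map_scalar_mx -(raddfB (@scalar_mx _ s)) det_scalar.
Qed.

Lemma eigenvalues_scalar s (c : algC) : eigenvalues (c%:M : 'M_s) = nseq s c.
Proof.
rewrite /eigenvalues; case: closed_field_poly_normal => l /=.
rewrite char_poly_scalar lead_coef_exp lead_coefXsubC expr1n scale1r => charE.
have size_l : size l = s.
  have := congr1 (fun p : {poly algC} => size p) charE.
  by rewrite size_exp_XsubC size_prod_XsubC => -[].
rewrite -size_l; apply/all_pred1P/allP => z l_z /=.
have := root_prod_XsubC l z; rewrite -charE l_z.
by rewrite rootE horner_exp hornerXsubC expf_eq0 subr_eq0 => /andP[].
Qed.

Lemma spectral_radius_scalar s (c : algC) :
  spectral_radius (c%:M : 'M_s) = if s is 0 then 0 else `|c|.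
Proof.
rewrite /spectral_radius eigenvalues_scalar big_nseq; case: s => // s.
by elim: s => [|s /= ->]; rewrite /= /Num.max ?ltxx // (le_gtF (normr_ge0 c)).
Qed.

Theorem corollary7p5 (k : closedFieldType) (r : nat) :
  (1 <= r)%N -> fpdim_is k r r%:R.
Proof.
move=> _; split=> [s phi bricks | x lt_xr].
  rewrite adjacency_brick_set // spectral_radius_scalar.
  by case: s {phi bricks} => [|s]; rewrite ?normr_nat ?ler0n.
pose M0 := @FDMod k r 1 (fun _ => 0) (fun _ _ => erefl).
have bricks : brick_set (fun _ : 'I_1 => M0).
  by move=> i j; rewrite !ord1 eqxx homdim_dim1_eq.
exists 1%N, (fun _ => M0); split => //.
by rewrite adjacency_brick_set // spectral_radius_scalar normr_nat.
Qed.
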